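(* Let $p$ be a prime and let $a,b$ be positive integers. Let $T_a,T_b$ be the Chebyshev polynomials of the first kind of degrees $a,b$, viewed as self-maps of $\mathbb{F}_p$. A point $z\in\mathbb{F}_p$ is periodic for $T_a\circ T_b$ if and only if it is periodic for both $T_a$ and $T_b$ (not necessarily of the same period).
   Context: The $d$-th Chebyshev polynomial of the first kind $T_d\in\mathbb{Z}[z]$ is the monic degree-$d$ polynomial with $T_d(z+z^{-1})=z^d+z^{-d}$; they satisfy $T_a\circ T_b=T_b\circ T_a=T_{ab}$. A point $z$ is periodic for a map $f$ if $f^n(z)=z$ for some $n\ge1$. *)

From mathcomp Require Import all_boot all_order all_algebra.
Set Implicit Arguments. Unset Strict Implicit. Unset Printing Implicit Defensive.
Import GRing.Theory.
Local Open Scope ring_scope.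

(* Chebyshev polynomials of the first kind, monic normalization:
   T_0 = 2, T_1 = X, T_{n+2} = X * T_{n+1} - T_n, so that
   T_d(z + z^-1) = z^d + z^-d. *)
Fixpoint cheb_pair (n : nat) : {poly int} * {poly int} :=
  match n with
  | 0%N => (2%:P, 'X)
  | n'.+1 => let: (a, b) := cheb_pair n' in (b, 'X * b - a)
  end.

Definition chebT (d : nat) : {poly int} := (cheb_pair d).1.

Definition chebMap (R : nzRingType) (d : nat) (x : R) : R :=
  (map_poly intr (chebT d)).[x].

Definition periodic (T : Type) (f : T -> T) (z : T) : Prop :=
  exists n : nat, (0 < n)%N /\ iter n f z = z.

Lemma chebT_defining_sanity : chebT 2 = 'X^2 - 2%:P.
Proof. rewrite /chebT /=. rewrite -expr2. by []. Qed.

From mathcomp Require Import all_boot all_order all_algebra.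
From mathcomp Require Import ring.
Set Implicit Arguments. Unset Strict Implicit. Unset Printing Implicit Defensive.
Import GRing.Theory.
Local Open Scope ring_scope.

(* T_a and T_b commute, both composites being T_(ab).  For commuting self-maps
   f, g of a finite set, if (f g)^n fixes z then z = g^N (f^N z) for every
   multiple N of n.  The f-orbit of z is eventually periodic, say
   f^(i+m) z = f^i z; taking N >= i gives
   f^m z = g^N (f^(N+m) z) = g^N (f^N z) = z.  Conversely f^m z = z and
   g^n z = z give (f g)^(mn) z = f^(mn) (g^(mn) z) = z. *)

Lemma chebTSS n : chebT n.+2 = 'X * chebT n.+1 - chebT n.
Proof. by rewrite /chebT /=; case: (cheb_pair n). Qed.

Section ChebyshevMap.
Variable R : comNzRingType.
Implicit Type x : R.

Lemma chebMap0 x : chebMap 0 x = 2.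
Proof. by rewrite /chebMap /chebT /= map_polyC hornerC. Qed.

Lemma chebMap1 x : chebMap 1 x = x.
Proof. by rewrite /chebMap /chebT /= map_polyX hornerX. Qed.

Lemma chebMapSS n x : chebMap n.+2 x = x * chebMap n.+1 x - chebMap n x.
Proof. by rewrite /chebMap chebTSS rmorphB rmorphM /= map_polyX !hornerE. Qed.

(* T_m T_n = T_(m+n) + T_(m-n) for m >= n, written with m = i + k, n = k. *)
Lemma chebMap_mul i k x :
  chebMap (i + k) x * chebMap k x = chebMap (i + k.*2) x + chebMap i x.
Proof.
elim/ltn_ind: k i => -[|[|k]] IH i.
- by rewrite addn0 chebMap0 mulr2n mulrDr mulr1.
- by rewrite addn1 chebMap1 mulrC addn2 chebMapSS subrK.
have IH1 := IH k.+1 (ltnSn _) i.+1; have IH2 := IH k (ltnW (ltnSn _)) i.+2.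
rewrite ?addSn ?addnS ?doubleS -/(k.*2) in IH1 IH2 *.
rewrite [chebMap k.+2 x]chebMapSS mulrBr mulrCA IH1 IH2.
rewrite [chebMap (_ + _).+4 x]chebMapSS [chebMap (_ + _).+3 x]chebMapSS.
by rewrite [chebMap i.+2 x]chebMapSS; ring.
Qed.

Lemma chebMap_comp m n x : chebMap m (chebMap n x) = chebMap (m * n) x.
Proof.
elim/ltn_ind: m => -[|[|m]] IH; first by rewrite !chebMap0.
  by rewrite chebMap1 mul1n.
rewrite chebMapSS IH // IH 1?ltnW // mulrC !mulSnr -addnA addnn chebMap_mul.
by rewrite addrK.
Qed.

Lemma chebMapC m n x : chebMap m (chebMap n x) = chebMap n (chebMap m x).
Proof. by rewrite !chebMap_comp mulnC. Qed.

End ChebyshevMap.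

Lemma iter_periodic_from (T : Type) (f : T -> T) x i m N :
  iter (i + m) f x = iter i f x -> (i <= N)%N -> iter (N + m) f x = iter N f x.
Proof. by move=> fx le_iN; rewrite -(subnK le_iN) -addnA iterD fx -iterD. Qed.

Lemma iter_eventually_periodic (T : finType) (f : T -> T) x :
  exists i m, (0 < m)%N /\ iter (i + m) f x = iter i f x.
Proof.
have /trajectP[i lt_i fx] := looping_order f x.
exists i, (order f x - i)%N; split; first by rewrite subn_gt0.
by rewrite subnKC; [exact: fx | exact: ltnW].
Qed.

Section CommutingMaps.
Variables (T : Type) (f g : T -> T).
Hypothesis fgC : forall x, f (g x) = g (f x).

Lemma iter_commute m n x : iter m f (iter n g x) = iter n g (iter m f x).
Proof.
have gC y : f (iter n g y) = iter n g (f y) by elim: n y => //= n IH y; rewrite fgC IH.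
by elim: m => //= m ->; rewrite gC.
Qed.

Lemma iter_comp n x : iter n (fun y => f (g y)) x = iter n f (iter n g x).
Proof. by elim: n => //= n ->; rewrite (iter_commute n 1). Qed.

Lemma periodic_comp z : periodic f z -> periodic g z -> periodic (fun y => f (g y)) z.
Proof.
move=> [m [m_gt0 fz]] [n [n_gt0 gz]]; exists (m * n)%N.
split; first by rewrite muln_gt0 m_gt0 n_gt0.
by rewrite iter_comp [iter _ g z]iterM (iter_fix _ gz) mulnC iterM (iter_fix _ fz).
Qed.

End CommutingMaps.

Lemma periodic_comp_left (T : finType) (f g : T -> T) z :
  (forall x, f (g x) = g (f x)) -> periodic (fun y => f (g y)) z -> periodic f z.
Proof.
move=> fgC [n [n_gt0 fgz]]; have [i [m [m_gt0 fz]]] := iter_eventually_periodic f z.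
exists m; split => //.
have le_iN : (i <= i * n)%N by rewrite leq_pmulr.
have zE : z = iter (i * n) g (iter (i * n) f z).
  by rewrite -iter_commute // -iter_comp // iterM iter_fix.
by rewrite {1}zE iter_commute // -iterD addnC (iter_periodic_from fz) // -zE.
Qed.

Lemma periodic_comp_iff (T : finType) (f g : T -> T) z :
  (forall x, f (g x) = g (f x)) ->
  periodic (fun y => f (g y)) z <-> periodic f z /\ periodic g z.
Proof.
move=> fgC; split => [fgz | [fz gz]]; last exact: periodic_comp.
split; first exact: periodic_comp_left fgz.
have gfC x : g (f x) = f (g x) by rewrite fgC.
apply: (periodic_comp_left gfC); case: fgz => n [n_gt0 fgz]; exists n; split => //.
by rewrite -[RHS]fgz; apply: eq_iter.
Qed.

Theorem mainTheorem4 (p : nat) (a b : nat) (z : 'F_p) :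
  prime p -> (0 < a)%N -> (0 < b)%N ->
  (periodic (fun x => chebMap a (chebMap b x)) z <->
   (periodic (chebMap a) z /\ periodic (chebMap b) z)).
Proof. by move=> _ _ _; apply: periodic_comp_iff => x; apply: chebMapC. Qed.
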